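(* Let $H<G$ be countable abelian groups such that every element of $G/H$ has odd order, and let $\pi:G\to G/H$ be the quotient map. Let $\{H=G_0<G_1<G_2<\cdots\}$ be a one-step ascending chain associated to $H$, with sequence of generators $\{g_i\}_{i\ge1}$ and (odd) indexes $m_i=[G_i:G_{i-1}]=2k_i+1$. Then every $g\in G$ can be written uniquely as \[g=h_g+\sum_{i=1}^{\infty}r_i g_i\] with $h_g\in H$, $r_i\in[-k_i,k_i]\cap\mathbb Z$, and $r_i=0$ for all $i$ larger than some $i_0$.
   Context: A one-step ascending chain of a countable locally finite group $Q$ is a chain $\{1\}=Q_0<Q_1<\cdots$ of subgroups with $Q=\bigcup_iQ_i$, together with elements $q_i$ such that $Q_i$ is generated by $q_1,\dots,q_i$ and $q_{i+1}\notin Q_i$. Given such a chain $\{Q_i\}$ of $G/H$ (which is locally finite) with generators $q_i$, the associated chain of $G$ is $G_i=\pi^{-1}(Q_i)$; a sequence of generators is any $g_i\in G$ with $\pi(g_i)=q_i$, and the indexes are $m_i=[G_i:G_{i-1}]=[Q_i:Q_{i-1}]$. *)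

From HB Require Import structures.
From mathcomp Require Import all_boot all_order all_algebra.
Set Implicit Arguments. Unset Strict Implicit. Unset Printing Implicit Defensive.
Import Order.TTheory GRing.Theory Num.Theory.
Local Open Scope ring_scope.

Definition is_subgroup (G : zmodType) (H : G -> Prop) : Prop :=
  H 0 /\ (forall x y, H x -> H y -> H (x - y)).

(* n is the order of the coset g + H in G/H (H a subgroup):
   the least positive n with n.(g + H) = 0, i.e. g *+ n \in H. *)
Definition coset_order (G : zmodType) (H : G -> Prop) (g : G) (n : nat) : Prop :=
  (0 < n)%N /\ H (g *+ n) /\ (forall m, (0 < m < n)%N -> ~ H (g *+ m)).

(* G_i = pi^{-1}(Q_i) = H + <g_1, ..., g_i>  (generators indexed from 1;
   g 0 is unused). *)
Definition chainG (G : zmodType) (H : G -> Prop) (g : nat -> G) (i : nat)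
  (x : G) : Prop :=
  exists h, H h /\ exists c : nat -> int,
    x = h + \sum_(1 <= j < i.+1) g j *~ c j.

(* {G_i} is the one-step ascending chain of G associated to a one-step
   ascending chain {Q_i} of G/H with generators q_i = pi(g_i):
   q_{i} \notin Q_{i-1} for i >= 1, and the union of the Q_i is G/H. *)
Definition one_step_chain (G : zmodType) (H : G -> Prop) (g : nat -> G) : Prop :=
  (forall i, (1 <= i)%N -> ~ chainG H g i.-1 (g i)) /\
  (forall x, exists i, chainG H g i x).

(* [B : A] = m for subgroups A <= B: there are exactly m cosets of A in B,
   i.e. a family of m representatives x_0..x_{m-1} in B such that every
   b in B lies in exactly one coset x_j + A. *)
Definition subgroup_index (G : zmodType) (A B : G -> Prop) (m : nat) : Prop :=
  exists x : 'I_m -> G, (forall j, B (x j)) /\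
    (forall b, B b -> exists! j, A (b - x j)).

From HB Require Import structures.
From mathcomp Require Import all_boot all_order all_algebra.
From mathcomp Require Import zify.
From Stdlib Require Import Classical ClassicalEpsilon.
Set Implicit Arguments. Unset Strict Implicit. Unset Printing Implicit Defensive.
Import Order.TTheory GRing.Theory Num.Theory.
Local Open Scope ring_scope.

(* Since G_i = G_(i-1) + <g_i>, the index m_i = [G_i : G_(i-1)] is the order
   of g_i modulo G_(i-1); it divides the order of g_i modulo H, hence is odd,
   m_i = 2 k_i + 1.  So every z g_i is congruent modulo G_(i-1) to r g_i with
   r the balanced residue of z mod m_i, |r| <= k_i; peeling off the top
   generator, induction along the chain gives existence.  For uniqueness,
   the difference of two expansions has coefficients of absolute value
   < m_i; its top term lies in G_(i-1), so its top coefficient vanishes,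
   and induction kills all of them. *)

Section Subgroup.
Variables (G : zmodType) (S : G -> Prop).
Hypothesis S_subgroup : is_subgroup S.

Lemma subgroup0 : S 0.
Proof. exact: S_subgroup.1. Qed.

Lemma subgroupB x y : S x -> S y -> S (x - y).
Proof. exact: S_subgroup.2. Qed.

Lemma subgroupN x : S x -> S (- x).
Proof. by move=> Sx; rewrite -sub0r; apply: subgroupB => //; exact: subgroup0. Qed.

Lemma subgroupD x y : S x -> S y -> S (x + y).
Proof. by move=> Sx Sy; rewrite -[y]opprK; apply: subgroupB => //; exact: subgroupN. Qed.

Lemma subgroupMn x n : S x -> S (x *+ n).
Proof.
move=> Sx; elim: n => [|n IHn]; first by rewrite mulr0n; exact: subgroup0.
by rewrite mulrS; exact: subgroupD.
Qed.

Lemma subgroupMz x z : S x -> S (x *~ z).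
Proof. by case: z => n Sx /=; [|apply: subgroupN]; exact: subgroupMn. Qed.

Lemma subgroup_subC x y : S (x - y) -> S (y - x).
Proof. by move/subgroupN; rewrite opprB. Qed.

Lemma subgroup_subKr x y z : S (x - z) -> S (y - z) -> S (x - y).
Proof. by move=> Sxz Syz; have := subgroupB Sxz Syz; rewrite opprB addrA subrK. Qed.

Lemma subgroup_mulrz_modz y (M : nat) (z : int) :
  S (y *+ M) -> S (y *~ z - y *~ (z %% M)%Z).
Proof.
move=> SyM; rewrite [X in y *~ X](divz_eq z M) mulrzDr addrK.
by rewrite mulrC mulrzA -pmulrn; exact: subgroupMz.
Qed.

Lemma coset_order_mulrz_eq0 y n (d : int) :
  coset_order S y n -> S (y *~ d) -> (`|d| < n)%N -> d = 0.
Proof.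
move=> [_ [_ n_min]] Syd d_lt; apply: NNPP => d_neq0.
apply: (n_min `|d|%N); first lia.
have [d_ge0 | d_lt0] := boolP (0 <= d).
  by rewrite pmulrn gez0_abs.
by rewrite pmulrn ltz0_abs ?mulrNz; [exact: subgroupN | rewrite ltNge].
Qed.

Lemma coset_order_dvdn y n n0 :
  coset_order S y n -> S (y *+ n0) -> (n %| n0)%N.
Proof.
move=> yn Syn0; have [n_gt0 [Syn _]] := yn.
have Sr : S (y *~ (n0 %% n)%N).
  rewrite -modz_nat -[X in S X](subKr (y *~ n0)); apply: subgroupB.
    by rewrite -pmulrn.
  exact: subgroup_mulrz_modz.
have := coset_order_mulrz_eq0 yn Sr; rewrite absz_nat ltn_pmod // => /(_ isT) r0.
by rewrite /dvdn; apply/eqP; lia.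
Qed.


Lemma coset_order_exists y n0 : (0 < n0)%N -> S (y *+ n0) -> exists n, coset_order S y n.
Proof.
elim/ltn_ind: n0 => n0 IH n0_gt0 Syn0.
case: (classic (exists t, (0 < t < n0)%N /\ S (y *+ t))) =>
  [[t [/andP [t_gt0 t_lt] Syt]] | n0_min].
  exact: IH t_lt t_gt0 Syt.
by exists n0; split=> //; split=> // t t_range Syt; apply: n0_min; exists t.
Qed.

Lemma subgroup_mulrz_modn y n (z : int) :
  (0 < n)%N -> S (y *+ n) -> exists t : 'I_n, S (y *~ z - y *+ t).
Proof.
move=> n_gt0 Syn; have n_neq0 : n%:Z != 0 by rewrite eqz_nat -lt0n.
have mod_lt : (`|(z %% n)%Z| < n)%N.
  by have := ltz_pmod z (n_gt0 : 0 < n%:Z); have := modz_ge0 z n_neq0; lia.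
exists (Ordinal mod_lt) => /=; rewrite pmulrn gez0_abs ?modz_ge0 //.
exact: subgroup_mulrz_modz.
Qed.

Lemma balanced_residue y (M : nat) (z : int) : odd M -> S (y *+ M) ->
  exists r : int, - (M./2)%:Z <= r <= (M./2)%:Z /\ S (y *~ z - y *~ r).
Proof.
move=> M_odd SyM; set k := M./2.
have M_def : M = k.*2.+1 by rewrite -[LHS]odd_double_half M_odd.
have M_gt0 : 0 < M%:Z by rewrite ltz_nat M_def.
exists (((z + k%:Z) %% M)%Z - k%:Z); split.
  have := ltz_pmod (z + k%:Z) M_gt0.
  by have := modz_ge0 (z + k%:Z) (lt0r_neq0 M_gt0); lia.
rewrite mulrzBr opprB addrA -mulrzDr.
exact: subgroup_mulrz_modz.
Qed.
End Subgroup.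

Lemma leq_card_total_injective_rel m n (R : 'I_m -> 'I_n -> Prop) :
  (forall i, exists j, R i j) -> (forall i i' j, R i j -> R i' j -> i = i') ->
  (m <= n)%N.
Proof.
move=> /choice [f Rf] R_inj.
have f_inj : injective f by move=> i i' fE; apply: (R_inj i i' (f i)); rewrite // fE.
by have := leq_card f f_inj; rewrite !card_ord.
Qed.

Lemma subgroup_index_cyclic (G : zmodType) (A B : G -> Prop) (y : G) n m :
  is_subgroup A -> (forall x, B x <-> exists a z, A a /\ x = a + y *~ z) ->
  coset_order A y n -> subgroup_index A B m -> m = n.
Proof.
move=> A_sub B_def yn [x [Bx x_cover]]; have [n_gt0 [Ayn _]] := yn.
have t_inj (t t' : 'I_n) : A (y *+ t - y *+ t') -> t = t'.
  rewrite !pmulrn -mulrzBr => /(coset_order_mulrz_eq0 A_sub yn) t_eq.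
  have := ltn_ord t; have := ltn_ord t' => t'_lt t_lt.
  have tt'_eq0 : t%:Z - t'%:Z = 0 by apply: t_eq; lia.
  by apply: ord_inj; lia.
have j_inj (j j' : 'I_m) : A (x j - x j') -> j = j'.
  move=> Ajj'; have [k [_ k_uniq]] := x_cover _ (Bx j).
  by rewrite -(k_uniq j) ?subrr ?(k_uniq j') //; exact: subgroup0.
apply/eqP; rewrite eqn_leq; apply/andP; split.
  apply: (@leq_card_total_injective_rel _ _
           (fun (j : 'I_m) (t : 'I_n) => A (x j - y *+ t))).
    move=> j; have [a [z [Aa ->]]] := (B_def _).1 (Bx j).
    have [t Ayt] := subgroup_mulrz_modn A_sub z n_gt0 Ayn.
    by exists t; rewrite -addrA; exact: subgroupD.
  by move=> j j' t Ajt Aj't; apply: j_inj; exact: (subgroup_subKr A_sub Ajt Aj't).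
apply: (@leq_card_total_injective_rel _ _
         (fun (t : 'I_n) (j : 'I_m) => A (x j - y *+ t))).
  move=> t; have /x_cover [j [Atj _]] : B (y *+ t).
    by apply/B_def; exists 0, t; rewrite add0r pmulrn; split=> //; exact: subgroup0.
  by exists j; exact: subgroup_subC.
move=> t t' j Ajt Ajt'; apply: t_inj.
by apply: (subgroup_subKr A_sub (z := x j)); exact: subgroup_subC.
Qed.

Lemma sum_mulrz_widen (V : zmodType) (g : nat -> V) (r : nat -> int) (i0 N : nat) :
  (i0 <= N)%N -> (forall j, (i0 < j)%N -> r j = 0) ->
  \sum_(1 <= j < i0.+1) g j *~ r j = \sum_(1 <= j < N.+1) g j *~ r j.
Proof.
move=> le_i0N r0; rewrite [RHS](big_cat_nat _ (n := i0.+1)) //.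
rewrite [X in _ = _ + X]big_nat [X in _ = _ + X]big1 ?addr0 //.
by move=> j /andP [i0_lt _]; rewrite r0 ?mulr0z.
Qed.

Lemma sum_mulrz_set_last (V : zmodType) (g : nat -> V) (r : nat -> int) i (c : int) :
  \sum_(1 <= j < i.+2) g j *~ (if j == i.+1 then c else r j)
    = \sum_(1 <= j < i.+1) g j *~ r j + g i.+1 *~ c.
Proof.
rewrite big_nat_recr //= eqxx; congr (_ + _).
by apply: eq_big_nat => j /andP [_ j_lt]; rewrite ifN // neq_ltn j_lt.
Qed.

Section Chain.
Variables (G : zmodType) (H : G -> Prop) (g : nat -> G).
Hypothesis H_subgroup : is_subgroup H.

Lemma chainG_subgroup i : is_subgroup (chainG H g i).
Proof.
split.
  exists 0; split; first exact: subgroup0.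
  by exists (fun _ => 0); rewrite big1 ?addr0 // => j _; rewrite mulr0z.
move=> _ _ [h1 [Hh1 [c1 ->]]] [h2 [Hh2 [c2 ->]]].
exists (h1 - h2); split; first exact: subgroupB.
exists (fun j => c1 j - c2 j).
by rewrite opprD addrACA -sumrB; congr (_ + _); apply: eq_bigr => j _; rewrite mulrzBr.
Qed.

Lemma chainG_of_H i x : H x -> chainG H g i x.
Proof.
move=> Hx; exists x; split=> //; exists (fun _ => 0).
by rewrite big1 ?addr0 // => j _; rewrite mulr0z.
Qed.

Lemma chainG0 x : chainG H g 0 x -> H x.
Proof. by move=> [h [Hh [c ->]]]; rewrite big_geq // addr0. Qed.

Lemma chainGS i x :
  chainG H g i.+1 x <-> exists y z, chainG H g i y /\ x = y + g i.+1 *~ z.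
Proof.
split=> [[h [Hh [c ->]]] | [y [z [[h [Hh [c ->]]] ->]]]].
  exists (h + \sum_(1 <= j < i.+1) g j *~ c j), (c i.+1); split.
    by exists h; split=> //; exists c.
  by rewrite big_nat_recr //= addrA.
exists h; split=> //; exists (fun j => if j == i.+1 then z else c j).
by rewrite sum_mulrz_set_last addrA.
Qed.

Lemma chainG_coset_order (m : nat -> nat) :
  (forall x, exists n, coset_order H x n /\ odd n) ->
  (forall i, (1 <= i)%N -> subgroup_index (chainG H g i.-1) (chainG H g i) (m i)) ->
  forall i, (1 <= i)%N -> coset_order (chainG H g i.-1) (g i) (m i) /\ odd (m i).
Proof.
move=> coset_order_odd index_m [//|i] _ /=.
have [n0 [[n0_gt0 [Hgn0 _]] n0_odd]] := coset_order_odd (g i.+1).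
have [n gn] := coset_order_exists n0_gt0 (chainG_of_H i Hgn0).
have -> : m i.+1 = n.
  apply: (subgroup_index_cyclic (chainG_subgroup i) _ gn (index_m i.+1 isT)).
  exact: chainGS.
split=> //; apply: contraTT n0_odd; rewrite -!dvdn2 => n_even.
exact: dvdn_trans n_even (coset_order_dvdn (chainG_subgroup i) gn (chainG_of_H i Hgn0)).
Qed.

Variable m : nat -> nat.
Hypothesis m_coset_order :
  forall i, (1 <= i)%N -> coset_order (chainG H g i.-1) (g i) (m i) /\ odd (m i).

Lemma expansion_exists i x : chainG H g i x ->
  exists h (r : nat -> int),
    [/\ H h, forall j, (1 <= j)%N -> - ((m j)./2)%:Z <= r j <= ((m j)./2)%:Z,
        forall j, (i < j)%N -> r j = 0
      & x = h + \sum_(1 <= j < i.+1) g j *~ r j].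
Proof.
elim: i x => [|i IH] x.
  move=> /chainG0 Hx; exists x, (fun _ => 0); split=> //; first by move=> j _; lia.
  by rewrite big_geq // addr0.
move=> /chainGS [y [z [y_in ->]]].
have [[_ [gm _]] m_odd] := m_coset_order (i := i.+1) isT.
have [r0 [r0_bound gz_r0]] := balanced_residue (chainG_subgroup i) z m_odd gm.
have [h [r [Hh r_bound r_supp y_eq]]] := IH _ (subgroupD (chainG_subgroup i) y_in gz_r0).
exists h, (fun j => if j == i.+1 then r0 else r j); split=> //.
- by move=> j j_gt0; case: eqP => [-> // | _]; exact: r_bound.
- by move=> j i_lt; rewrite ifN ?r_supp ?neq_ltn ?i_lt ?orbT // ltnW.
by rewrite sum_mulrz_set_last addrA -y_eq addrA subrK.
Qed.

Lemma expansion_eq0 N h (d : nat -> int) : H h ->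
  (forall j, (1 <= j)%N -> (`|d j| < m j)%N) ->
  h + \sum_(1 <= j < N.+1) g j *~ d j = 0 ->
  h = 0 /\ forall j, (1 <= j <= N)%N -> d j = 0.
Proof.
move=> + d_bound; elim: N h => [|N IH] h Hh.
  by rewrite big_geq // addr0 => ->; split=> // j; lia.
rewrite big_nat_recr //= addrA => sum0.
have [gm _] := m_coset_order (i := N.+1) isT.
have dN : d N.+1 = 0.
  apply: (coset_order_mulrz_eq0 (chainG_subgroup N) gm); last exact: d_bound.
  have -> : g N.+1 *~ d N.+1 = - (h + \sum_(1 <= j < N.+1) g j *~ d j).
    by apply/eqP; rewrite -addr_eq0 addrC sum0.
  by apply: (subgroupN (chainG_subgroup N)); exists h; split=> //; exists d.
rewrite dN mulr0z addr0 in sum0.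
have [-> d0] := IH h Hh sum0.
split=> // j /andP [j_gt0]; rewrite leq_eqVlt => /orP [/eqP -> // | j_lt].
by apply: d0; lia.
Qed.
End Chain.

Theorem mainTheorem13 (G : countZmodType) (H : G -> Prop)
  (Hsub : is_subgroup H) (Hproper : exists x : G, ~ H x)
  (Hodd : forall x : G, exists n, coset_order H x n /\ odd n)
  (g : nat -> G) (Hchain : one_step_chain H g)
  (m : nat -> nat)
  (Hm : forall i, (1 <= i)%N -> subgroup_index (chainG H g i.-1) (chainG H g i) (m i)) :
  (forall i, (1 <= i)%N -> odd (m i)) /\
  let k := fun i => (m i)./2 in
  forall x : G,
    (exists (h : G) (r : nat -> int) (i0 : nat),
       H h /\
       (forall i, (1 <= i)%N -> - (k i)%:Z <= r i <= (k i)%:Z) /\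
       (forall i, (i0 < i)%N -> r i = 0) /\
       x = h + \sum_(1 <= i < i0.+1) g i *~ r i) /\
    (forall (h h' : G) (r r' : nat -> int) (i0 i0' : nat),
       H h -> H h' ->
       (forall i, (1 <= i)%N -> - (k i)%:Z <= r i <= (k i)%:Z) ->
       (forall i, (1 <= i)%N -> - (k i)%:Z <= r' i <= (k i)%:Z) ->
       (forall i, (i0 < i)%N -> r i = 0) ->
       (forall i, (i0' < i)%N -> r' i = 0) ->
       x = h + \sum_(1 <= i < i0.+1) g i *~ r i ->
       x = h' + \sum_(1 <= i < i0'.+1) g i *~ r' i ->
       h = h' /\ forall i, (1 <= i)%N -> r i = r' i).
Proof.
(* Neither [Hproper] nor the strictness [Hchain.1] of the chain is needed. *)
have m_fact := chainG_coset_order Hsub Hodd Hm.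
split=> [i /m_fact [] // | k x]; split.
  have [i x_in] := Hchain.2 x.
  have [h [r [Hh r_bound r_supp ->]]] := expansion_exists Hsub m_fact x_in.
  by exists h, r, i.
move=> h h' r r' i0 i0' Hh Hh' r_bound r'_bound r_supp r'_supp x_eq x_eq'.
set N := maxn i0 i0'.
rewrite (sum_mulrz_widen g (leq_maxl i0 i0') r_supp) in x_eq.
rewrite (sum_mulrz_widen g (leq_maxr i0 i0') r'_supp) in x_eq'.
have diff_bound i : (1 <= i)%N -> (`|r i - r' i| < m i)%N.
  move=> i_gt0; have := r_bound _ i_gt0; have := r'_bound _ i_gt0; rewrite /k.
  have [_ m_odd] := m_fact _ i_gt0.
  by have := odd_double_half (m i); rewrite m_odd; lia.
have diff0 : h - h' + \sum_(1 <= i < N.+1) g i *~ (r i - r' i) = 0.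
  under eq_bigr do rewrite mulrzBr.
  by rewrite sumrB addrACA -opprD -x_eq -x_eq' subrr.
have [/subr0_eq -> diff_eq0] :=
  expansion_eq0 Hsub m_fact (subgroupB Hsub Hh Hh') diff_bound diff0.
split=> // i i_gt0; have [i_le | N_lt] := leqP i N.
  by apply/subr0_eq/diff_eq0; rewrite i_gt0.
by rewrite r_supp ?r'_supp // (leq_ltn_trans _ N_lt) // ?leq_maxl ?leq_maxr.
Qed.
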